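(* Let $U\sim\mathrm{unif}(0,1)$. For all $n\ge1$, $$b_n:=\big\|C_n(\lceil nU\rceil)-C(U)\big\|_2\le \Big(3+\frac{2\pi}{\sqrt3}\Big)\frac1n<\frac{6.63}{n}.$$
   Context: Let $H_n=\sum_{k=1}^n 1/k$ and $\mu_n := 2(n+1)H_n-4n$ for $n\ge0$; this is the expected number of comparisons of randomized Quicksort on $n$ distinct numbers. For $n\ge1$ and $1\le i\le n$, define $$C_n(i):=\frac{n-1}{n}+\frac1n\big(\mu_{i-1}+\mu_{n-i}-\mu_n\big).$$ Define $C(u):=2u\ln u+2(1-u)\ln(1-u)+1$ for $u\in[0,1]$, with $C(0)=C(1)=1$. $\|\cdot\|_2$ denotes the $L^2$ norm. *)

From Stdlib Require Import Reals ZArith.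
From Coquelicot Require Import Coquelicot.
Open Scope R_scope.

Fixpoint harm (n : nat) : R :=
  match n with
  | O => 0
  | S m => harm m + / INR (S m)
  end.

Definition mu (n : nat) : R := 2 * (INR n + 1) * harm n - 4 * INR n.

(* C_n(i) = (n-1)/n + (mu_{i-1} + mu_{n-i} - mu_n)/n, for 1 <= i <= n
   (nat subtraction is truncated; only 1 <= i <= n is relevant) *)
Definition Cn (n i : nat) : R :=
  (INR n - 1) / INR n + (mu (i - 1) + mu (n - i) - mu n) / INR n.

Definition Clim (u : R) : R :=
  if Req_EM_T u 0 then 1
  else if Req_EM_T u 1 then 1
  else 2 * u * ln u + 2 * (1 - u) * ln (1 - u) + 1.

Definition ceilZ (x : R) : Z := (- Int_part (- x))%Z.

Definition ceil_nat (x : R) : nat := Z.to_nat (ceilZ x).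

Definition err2 (n : nat) (u : R) : R :=
  (Cn n (ceil_nat (INR n * u)) - Clim u) ^ 2.

From Stdlib Require Import Reals Lra Lia Psatz ZArith.
From Coquelicot Require Import Coquelicot.
Open Scope R_scope.

(** Write [N = n], [a = ⌈N u⌉], [b = N + 1 - a], [t = N u], [s = N (1 - u)].
    Expanding [μ] gives [N C_n(a) = N + 1 + 2 (a H_a + b H_b - (N+1) H_(N+1))]
    and [N C(u) = N + 2 (t ln t + s ln s - N ln N)].  Writing [H_k = ln k + γ_k],
    the scaled error [D = N (C_n(a) - C(u))] splits as [1 + 2E + 2Δ], where
    [0 <= E <= 2] because [k (γ_k - γ_m)] lies in [[0,1]], and [Δ] compares
    [x ln x] at [a, b, N+1] with [t, s, N].  Since [a - t = 1 - (b - s)] lies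
    in [[0,1]], convexity of [x ln x] gives [ln (min t s / (N+1)) <= Δ <= 0].
    Hence [N² (C_n - C)² <= 25 + (2 ln 2 - 1 - 2 ln (min u (1-u)))²], whose
    integral over [[0,1]] is [29 + (4 ln 2 + 1)² < (3 + 2π/√3)²]; near the
    endpoints, where this majorant is unbounded, the cruder bound
    [Δ >= -1 - ln (N+1)] is used instead. *)

Lemma ln_le_sub_1 x : 0 < x -> ln x <= x - 1.
Proof. intros hx. pose proof (exp_ineq1_le (ln x)) as h. rewrite exp_ln in h; lra. Qed.

Lemma ln_sub_le x y : 0 < x -> 0 < y -> ln y - ln x <= (y - x) / x.
Proof.
  intros hx hy. rewrite <- ln_div by lra.
  replace ((y - x) / x) with (y / x - 1) by (field; lra).
  apply ln_le_sub_1, Rdiv_lt_0_compat; lra.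
Qed.

Lemma ln_sub_ge x y : 0 < x -> 0 < y -> (y - x) / y <= ln y - ln x.
Proof.
  intros hx hy. pose proof (ln_sub_le y x hy hx).
  replace ((y - x) / y) with (- ((x - y) / y)) by (field; lra). lra.
Qed.

(** * Harmonic numbers *)

Definition harm_ln_gap (k : nat) : R := harm k - ln (INR k).

Lemma harm_ln_gap_succ k : (1 <= k)%nat -> harm_ln_gap (S k) <= harm_ln_gap k.
Proof.
  intros hk. unfold harm_ln_gap. cbn [harm]. rewrite S_INR.
  assert (1 <= INR k) by (apply (le_INR 1); lia).
  pose proof (ln_sub_ge (INR k) (INR k + 1) ltac:(lra) ltac:(lra)) as h.
  replace ((INR k + 1 - INR k) / (INR k + 1)) with (/ (INR k + 1)) in h by (field; lra).
  lra.
Qed.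

Lemma harm_ln_gap_antitone k m : (1 <= k <= m)%nat -> harm_ln_gap m <= harm_ln_gap k.
Proof.
  intros [hk hkm]. induction hkm as [|m hkm IH]; [lra|].
  pose proof (harm_ln_gap_succ m ltac:(lia)). lra.
Qed.

Lemma harm_sub_ln_succ_monotone k m : (k <= m)%nat ->
  harm k - ln (INR k + 1) <= harm m - ln (INR m + 1).
Proof.
  intros hkm. induction hkm as [|m hkm IH]; [lra|].
  cbn [harm]. rewrite S_INR.
  assert (0 <= INR m) by apply pos_INR.
  pose proof (ln_sub_le (INR m + 1) (INR m + 1 + 1) ltac:(lra) ltac:(lra)) as h.
  replace ((INR m + 1 + 1 - (INR m + 1)) / (INR m + 1)) with (/ (INR m + 1)) in h
    by (field; lra).
  lra.
Qed.

Lemma harm_ln_gap_bounds k m : (1 <= k <= m)%nat ->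
  0 <= INR k * (harm_ln_gap k - harm_ln_gap m) <= 1.
Proof.
  intros hkm.
  assert (hk : 1 <= INR k) by (apply (le_INR 1); lia).
  assert (hm : 1 <= INR m) by (apply (le_INR 1); lia).
  pose proof (harm_ln_gap_antitone k m hkm) as hdec.
  pose proof (harm_sub_ln_succ_monotone k m ltac:(lia)) as hinc.
  assert (ln (INR m) <= ln (INR m + 1)) by (apply ln_le; lra).
  assert (hstep : INR k * (ln (INR k + 1) - ln (INR k)) <= 1).
  { pose proof (ln_sub_le (INR k) (INR k + 1) ltac:(lra) ltac:(lra)) as h.
    apply Rmult_le_compat_l with (r := INR k) in h; [|lra].
    replace (INR k * ((INR k + 1 - INR k) / INR k)) with 1 in h by (field; lra).
    exact h. }
  unfold harm_ln_gap in *. split; nra.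
Qed.

(** * The function [x ln x] *)

Definition xlnx (x : R) : R := x * ln x.

Lemma xlnx_sub_ge x y : 0 < x -> 0 < y -> (y - x) * (1 + ln x) <= xlnx y - xlnx x.
Proof.
  intros hx hy. unfold xlnx.
  pose proof (ln_sub_ge x y hx hy) as h.
  apply Rmult_le_compat_l with (r := y) in h; [|lra].
  replace (y * ((y - x) / y)) with (y - x) in h by (field; lra).
  nra.
Qed.

Lemma xlnx_le x y : 0 < x <= y -> 1 <= y -> xlnx x <= xlnx y.
Proof.
  intros [hx hxy] hy. destruct (Rle_lt_dec 1 x) as [h1|h1].
  - pose proof (xlnx_sub_ge x y hx ltac:(lra)).
    assert (0 <= ln x) by (rewrite <- ln_1; apply ln_le; lra). nra.
  - unfold xlnx.
    assert (ln x < 0) by (rewrite <- ln_1; apply ln_increasing; lra).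
    assert (0 <= ln y) by (rewrite <- ln_1; apply ln_le; lra). nra.
Qed.

(** [ln x = 2 ln (sqrt x)] and [ln (1 / sqrt x) <= 1 / sqrt x - 1]. *)
Lemma Rabs_xlnx_le x : 0 < x < 1 -> Rabs (xlnx x) <= 2 * sqrt x.
Proof.
  intros hx. unfold xlnx.
  assert (hs : 0 < sqrt x) by (apply sqrt_lt_R0; lra).
  assert (hl : ln x < 0) by (rewrite <- ln_1; apply ln_increasing; lra).
  assert (hx2 : x = sqrt x * sqrt x) by (rewrite sqrt_sqrt; lra).
  assert (e : ln x = 2 * ln (sqrt x)).
  { rewrite hx2 at 1. rewrite ln_mult by lra. ring. }
  pose proof (ln_le_sub_1 (/ sqrt x) ltac:(apply Rinv_0_lt_compat; lra)) as h.
  rewrite ln_Rinv in h by lra.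
  assert (x * / sqrt x = sqrt x) by (rewrite hx2 at 1; field; lra).
  rewrite Rabs_left by nra. nra.
Qed.

(** At [0] this uses [ln x = 0] for [x <= 0], so that [xlnx] vanishes there. *)
Lemma continuous_xlnx x : 0 <= x -> continuous xlnx x.
Proof.
  intros [hx|<-].
  - apply (ex_derive_continuous (K := R_AbsRing) (V := R_NormedModule)).
    unfold xlnx. auto_derive. lra.
  - apply continuity_pt_filterlim.
    intros eps heps. exists (Rmin 1 (eps * eps / 4)).
    split; [apply Rmin_pos; nra|].
    intros x [_ hx]. simpl in *. unfold R_dist in *. rewrite Rminus_0_r in hx.
    unfold xlnx at 2. rewrite Rmult_0_l, Rminus_0_r.
    pose proof (Rmin_l 1 (eps * eps / 4)). pose proof (Rmin_r 1 (eps * eps / 4)).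
    destruct (Rle_lt_dec x 0) as [h|h].
    + assert (ln x = 0) as e by (unfold ln; destruct (Rlt_dec 0 x); [exfalso; lra | reflexivity]).
      unfold xlnx. rewrite e, Rmult_0_r, Rabs_R0. lra.
    + rewrite Rabs_right in hx by lra.
      pose proof (Rabs_xlnx_le x ltac:(lra)).
      assert (sqrt x < eps / 2).
      { rewrite <- (sqrt_pow2 (eps / 2)) by lra. apply sqrt_lt_1; nra. }
      lra.
Qed.

Definition xlnx_gap (A B t s : R) : R :=
  (xlnx A - xlnx t) + (xlnx B - xlnx s) - (xlnx (t + s + 1) - xlnx (t + s)).

Section XlnxGap.

Variables A B t s : R.
Hypotheses (ht : 0 < t) (hs : 0 < s) (hA : 1 <= A) (hB : 1 <= B)
  (hAB : A + B = t + s + 1) (htA : t <= A <= t + 1).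

Lemma xlnx_gap_nonpos : xlnx_gap A B t s <= 0.
Proof.
  unfold xlnx_gap.
  pose proof (xlnx_sub_ge A t ltac:(lra) ht).
  pose proof (xlnx_sub_ge B s ltac:(lra) hs).
  pose proof (xlnx_sub_ge (t + s) (t + s + 1) ltac:(lra) ltac:(lra)).
  assert (ln A <= ln (t + s)) by (apply ln_le; lra).
  assert (ln B <= ln (t + s)) by (apply ln_le; lra).
  assert ((A - t) * (ln A - ln (t + s)) <= 0) by (apply Rmult_le_0_l; lra).
  assert ((B - s) * (ln B - ln (t + s)) <= 0) by (apply Rmult_le_0_l; lra).
  nra.
Qed.

Lemma xlnx_gap_ge_crude : - (1 + ln (t + s + 1)) <= xlnx_gap A B t s.
Proof.
  unfold xlnx_gap.
  pose proof (xlnx_le t A ltac:(lra) hA).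
  pose proof (xlnx_le s B ltac:(lra) hB).
  pose proof (xlnx_sub_ge (t + s + 1) (t + s) ltac:(lra) ltac:(lra)).
  lra.
Qed.

Lemma xlnx_gap_ge_ln m : 0 < m -> m <= t -> m <= s ->
  ln m - ln (t + s + 1) <= xlnx_gap A B t s.
Proof.
  intros hm hmt hms. unfold xlnx_gap.
  pose proof (xlnx_sub_ge t A ht ltac:(lra)).
  pose proof (xlnx_sub_ge s B hs ltac:(lra)).
  pose proof (xlnx_sub_ge (t + s + 1) (t + s) ltac:(lra) ltac:(lra)).
  assert ((A - t) * (ln m - ln t) <= 0) by (apply Rmult_le_0_l; [|apply Rle_minus, ln_le]; lra).
  assert ((B - s) * (ln m - ln s) <= 0) by (apply Rmult_le_0_l; [|apply Rle_minus, ln_le]; lra).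
  nra.
Qed.

End XlnxGap.

(** * Decomposition of the scaled error *)

Lemma mu_succ k : mu k = 2 * (INR (S k) * harm (S k)) - 4 * INR (S k) + 2.
Proof.
  unfold mu. cbn [harm]. rewrite S_INR.
  assert (0 <= INR k) by apply pos_INR.
  field. lra.
Qed.

Lemma Cn_decomp a b : (1 <= a)%nat -> (1 <= b)%nat ->
  INR (a + b - 1) * Cn (a + b - 1) a =
  INR (a + b) + 2 * (xlnx (INR a) + xlnx (INR b) - xlnx (INR (a + b)))
  + 2 * (INR a * (harm_ln_gap a - harm_ln_gap (a + b))
         + INR b * (harm_ln_gap b - harm_ln_gap (a + b))).
Proof.
  intros ha hb. destruct a as [|p]; [lia|]. destruct b as [|q]; [lia|].
  replace (S p + S q - 1)%nat with (S (p + q)) by lia.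
  replace (S p + S q)%nat with (S (S (p + q))) by lia.
  unfold Cn, harm_ln_gap, xlnx.
  replace (S p - 1)%nat with p by lia.
  replace (S (p + q) - S p)%nat with q by lia.
  rewrite (mu_succ p), (mu_succ q), (mu_succ (S (p + q))).
  rewrite !S_INR, plus_INR.
  assert (0 <= INR p) by apply pos_INR. assert (0 <= INR q) by apply pos_INR.
  field. lra.
Qed.

Lemma Clim_eq u : 0 <= u <= 1 -> Clim u = 2 * xlnx u + 2 * xlnx (1 - u) + 1.
Proof.
  intros hu. unfold Clim, xlnx.
  assert (ln 0 = 0) as e0 by (unfold ln; destruct (Rlt_dec 0 0); [exfalso; lra | reflexivity]).
  destruct (Req_EM_T u 0) as [->|h0].
  { rewrite Rminus_0_r, ln_1, e0. ring. }
  destruct (Req_EM_T u 1) as [->|h1].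
  { rewrite Rminus_diag, ln_1, e0. ring. }
  ring.
Qed.

Lemma Clim_scaled N u : 0 < N -> 0 < u < 1 ->
  N * Clim u = N + 2 * (xlnx (N * u) + xlnx (N * (1 - u)) - xlnx N).
Proof.
  intros hN hu. rewrite Clim_eq by lra. unfold xlnx.
  rewrite !ln_mult by lra. ring.
Qed.

Lemma ceil_nat_spec x : 0 < x ->
  (1 <= ceil_nat x)%nat /\ INR (ceil_nat x) - 1 < x <= INR (ceil_nat x).
Proof.
  intros hx. unfold ceil_nat, ceilZ.
  destruct (base_Int_part (- x)) as [h1 h2].
  assert (hz : (Int_part (- x) <= -1)%Z).
  { apply Z.lt_succ_r, lt_IZR. rewrite succ_IZR. lra. }
  rewrite INR_IZR_INZ, Z2Nat.id, opp_IZR by lia.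
  split; [lia | lra].
Qed.

Lemma ceil_nat_eq x k : (1 <= k)%nat -> INR k - 1 < x <= INR k -> ceil_nat x = k.
Proof.
  intros hk hx.
  assert (1 <= INR k) by (apply (le_INR 1); lia).
  destruct (ceil_nat_spec x ltac:(lra)) as [hc hcx].
  assert (ceil_nat x < S k)%nat by (apply INR_lt; rewrite S_INR; lra).
  assert (k < S (ceil_nat x))%nat by (apply INR_lt; rewrite S_INR; lra).
  lia.
Qed.

Definition scaled_err (n : nat) (u : R) : R :=
  INR n * (Cn n (ceil_nat (INR n * u)) - Clim u).

Lemma err2_scaled n u : INR n ^ 2 * err2 n u = scaled_err n u ^ 2.
Proof. unfold err2, scaled_err. ring. Qed.

Lemma scaled_err_split n u : (1 <= n)%nat -> 0 < u < 1 ->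
  exists E A B, 0 <= E <= 2 /\ 1 <= A /\ 1 <= B /\ A + B = INR n + 1 /\
    INR n * u <= A <= INR n * u + 1 /\
    scaled_err n u = 1 + 2 * E + 2 * xlnx_gap A B (INR n * u) (INR n * (1 - u)).
Proof.
  intros hn hu.
  assert (hN : 1 <= INR n) by (apply (le_INR 1); lia).
  destruct (ceil_nat_spec (INR n * u) ltac:(nra)) as [ha hau].
  set (a := ceil_nat (INR n * u)) in *.
  assert (han : (a < S n)%nat) by (apply INR_lt; rewrite S_INR; nra).
  set (b := (S n - a)%nat).
  pose proof (harm_ln_gap_bounds a (a + b) ltac:(lia)) as hEa.
  pose proof (harm_ln_gap_bounds b (a + b) ltac:(lia)) as hEb.
  pose proof (Cn_decomp a b ltac:(lia) ltac:(lia)) as hCn.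
  replace (a + b - 1)%nat with n in hCn by lia.
  replace (a + b)%nat with (S n) in hCn, hEa, hEb by lia.
  exists (INR a * (harm_ln_gap a - harm_ln_gap (S n))
          + INR b * (harm_ln_gap b - harm_ln_gap (S n))), (INR a), (INR b).
  assert (hab : INR a + INR b = INR n + 1) by (rewrite <- S_INR, <- plus_INR; f_equal; lia).
  split; [lra|]. split; [apply (le_INR 1); lia|]. split; [apply (le_INR 1); lia|].
  split; [exact hab|]. split; [lra|].
  unfold scaled_err, xlnx_gap. fold a.
  rewrite Rmult_minus_distr_l, hCn, Clim_scaled by lra.
  replace (INR n * u + INR n * (1 - u)) with (INR n) by ring.
  rewrite S_INR. ring.
Qed.

Lemma scaled_err_le n u : (1 <= n)%nat -> 0 < u < 1 -> scaled_err n u <= 5.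
Proof.
  intros hn hu. assert (1 <= INR n) by (apply (le_INR 1); lia).
  destruct (scaled_err_split n u hn hu) as (E & A & B & hE & hA & hB & hAB & hAt & ->).
  pose proof (xlnx_gap_nonpos A B (INR n * u) (INR n * (1 - u))
    ltac:(nra) ltac:(nra) hA hB ltac:(lra) hAt).
  lra.
Qed.

Lemma scaled_err_ge_crude n u : (1 <= n)%nat -> 0 < u < 1 ->
  - 1 - 2 * ln (INR n + 1) <= scaled_err n u.
Proof.
  intros hn hu. assert (1 <= INR n) by (apply (le_INR 1); lia).
  destruct (scaled_err_split n u hn hu) as (E & A & B & hE & hA & hB & hAB & hAt & ->).
  pose proof (xlnx_gap_ge_crude A B (INR n * u) (INR n * (1 - u))
    ltac:(nra) ltac:(nra) hA hB ltac:(lra) hAt) as h.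
  replace (INR n * u + INR n * (1 - u) + 1) with (INR n + 1) in h by ring.
  lra.
Qed.

(** [N + 1 <= 2 N] turns the bound [ln (N m) - ln (N + 1)] on [xlnx_gap] into [ln m - ln 2]. *)
Lemma scaled_err_ge_ln n u m : (1 <= n)%nat -> 0 < u < 1 -> 0 < m -> m <= u -> m <= 1 - u ->
  1 - 2 * ln 2 + 2 * ln m <= scaled_err n u.
Proof.
  intros hn hu hm hmu hmu'. assert (1 <= INR n) by (apply (le_INR 1); lia).
  destruct (scaled_err_split n u hn hu) as (E & A & B & hE & hA & hB & hAB & hAt & ->).
  pose proof (xlnx_gap_ge_ln A B (INR n * u) (INR n * (1 - u))
    ltac:(nra) ltac:(nra) hA hB ltac:(lra) hAt (INR n * m) ltac:(nra) ltac:(nra) ltac:(nra)) as h.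
  replace (INR n * u + INR n * (1 - u) + 1) with (INR n + 1) in h by ring.
  rewrite ln_mult in h by lra.
  assert (ln (INR n + 1) <= ln 2 + ln (INR n)) by (rewrite <- ln_mult by lra; apply ln_le; lra).
  lra.
Qed.

Lemma sqr_le_of_bounds D Y : - Y <= D <= 5 -> 0 <= Y -> D ^ 2 <= 25 + Y ^ 2.
Proof. intros hD hY. destruct (Rle_lt_dec 0 D); nra. Qed.

Definition log_majorant (u : R) : R := 25 + (2 * ln 2 - 1 - 2 * ln u) ^ 2.

Lemma err2_le_crude n u : (1 <= n)%nat -> 0 < u < 1 ->
  INR n ^ 2 * err2 n u <= 25 + (1 + 2 * ln (INR n + 1)) ^ 2.
Proof.
  intros hn hu. assert (1 <= INR n) by (apply (le_INR 1); lia).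
  assert (0 <= ln (INR n + 1)) by (rewrite <- ln_1; apply ln_le; lra).
  rewrite err2_scaled. apply sqr_le_of_bounds; [split|]; try lra.
  - pose proof (scaled_err_ge_crude n u hn hu). lra.
  - apply scaled_err_le; assumption.
Qed.

Lemma err2_le_log_majorant n u m : (1 <= n)%nat -> 0 < u < 1 ->
  0 < m -> m <= u -> m <= 1 - u -> INR n ^ 2 * err2 n u <= log_majorant m.
Proof.
  intros hn hu hm hmu hmu'.
  assert (ln m <= ln (/ 2)) by (apply ln_le; lra).
  rewrite ln_Rinv in * by lra. pose proof ln_lt_2.
  rewrite err2_scaled. apply sqr_le_of_bounds; [split|]; try lra.
  - pose proof (scaled_err_ge_ln n u m hn hu hm hmu hmu'). lra.
  - apply scaled_err_le; assumption.
Qed.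

Lemma continuous_Clim_eq u : 0 <= u <= 1 ->
  continuous (fun u => 2 * xlnx u + 2 * xlnx (1 - u) + 1) u.
Proof.
  intros hu.
  apply (continuous_plus (fun u => 2 * xlnx u + 2 * xlnx (1 - u)) (fun _ => 1));
    [|apply continuous_const].
  apply (continuous_plus (fun u => 2 * xlnx u) (fun u => 2 * xlnx (1 - u))).
  - apply (continuous_mult (fun _ => 2) xlnx); [apply continuous_const|].
    apply continuous_xlnx; lra.
  - apply (continuous_mult (fun _ => 2) (fun u => xlnx (1 - u))); [apply continuous_const|].
    apply (continuous_comp (fun u => 1 - u) xlnx).
    + apply (continuous_minus (fun _ => 1) (fun u => u));
        [apply continuous_const | apply continuous_id].
    + apply continuous_xlnx; lra.
Qed.

(** On [(k/n, (k+1)/n)] the ceiling is constant, equal to [k + 1]. *)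
Lemma ex_RInt_err2_piece n k : (k < n)%nat ->
  ex_RInt (err2 n) (INR k / INR n) (INR (S k) / INR n).
Proof.
  intros hk.
  assert (hN : 0 < INR n) by (apply (lt_INR 0); lia).
  assert (hkn : INR (S k) <= INR n) by (apply le_INR; lia).
  assert (0 <= INR k) by apply pos_INR.
  rewrite S_INR in *.
  assert (hinv : INR n * / INR n = 1) by (field; lra).
  assert (0 < / INR n) by (apply Rinv_0_lt_compat; lra).
  assert (0 <= INR k / INR n) by (unfold Rdiv; nra).
  assert (INR k / INR n <= (INR k + 1) / INR n) by (unfold Rdiv; nra).
  assert ((INR k + 1) / INR n <= 1) by (unfold Rdiv; nra).
  apply (ex_RInt_ext (fun u => (Cn n (S k) - (2 * xlnx u + 2 * xlnx (1 - u) + 1))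
                              * (Cn n (S k) - (2 * xlnx u + 2 * xlnx (1 - u) + 1)))).
  - intros x hx. rewrite Rmin_left, Rmax_right in hx by lra.
    assert (INR k < INR n * x < INR k + 1) as hnx by (unfold Rdiv in hx; split; nra).
    unfold err2. rewrite (ceil_nat_eq (INR n * x) (S k)) by (try lia; rewrite S_INR; split; lra).
    rewrite Clim_eq by lra. simpl. ring.
  - apply (ex_RInt_continuous (V := R_CompleteNormedModule)). intros z hz.
    rewrite Rmin_left, Rmax_right in hz by lra.
    pose proof (continuous_Clim_eq z ltac:(lra)) as hc.
    assert (hd : continuous (fun u => Cn n (S k) - (2 * xlnx u + 2 * xlnx (1 - u) + 1)) z)
      by (apply (continuous_minus (fun _ => Cn n (S k))); [apply continuous_const | exact hc]).
    exact (continuous_mult _ _ z hd hd).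
Qed.

Lemma ex_RInt_err2 n : (1 <= n)%nat -> ex_RInt (err2 n) 0 1.
Proof.
  intros hn. assert (hN : 0 < INR n) by (apply (lt_INR 0); lia).
  replace 1 with (INR n / INR n) by (field; lra).
  replace 0 with (INR 0 / INR n) by (simpl; field; lra).
  assert (hup : forall k, (k <= n)%nat -> ex_RInt (err2 n) (INR 0 / INR n) (INR k / INR n)).
  { induction k as [|k IH]; intros hk; [apply ex_RInt_point|].
    apply (ex_RInt_Chasles _ _ (INR k / INR n)); [apply IH; lia | apply ex_RInt_err2_piece; lia]. }
  apply hup. lia.
Qed.

Lemma RInt_le_split_majorant (f g G : R -> R) (a b M : R) :
  0 < a <= b -> ex_RInt f 0 b ->
  (forall u, 0 < u < a -> f u <= M) ->
  (forall u, a < u < b -> f u <= g u) ->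
  is_RInt g a b (G b - G a) -> a * M <= G a ->
  RInt f 0 b <= G b.
Proof.
  intros hab hf hM hg hG haM.
  assert (hf1 : ex_RInt f 0 a) by (apply (ex_RInt_Chasles_1 f 0 a b); [lra | exact hf]).
  assert (hf2 : ex_RInt f a b) by (apply (ex_RInt_Chasles_2 f 0 a b); [lra | exact hf]).
  rewrite <- (RInt_Chasles f 0 a b hf1 hf2).
  assert (RInt f 0 a <= (a - 0) * M)
    by (apply (is_RInt_le f (fun _ => M) 0 a); [lra | apply (RInt_correct (V := R_CompleteNormedModule)), hf1 | exact (is_RInt_const 0 a M) | exact hM]).
  assert (RInt f a b <= G b - G a)
    by (apply (is_RInt_le f g a b); [lra | apply (RInt_correct (V := R_CompleteNormedModule)), hf2 | exact hG | exact hg]).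
  unfold plus; simpl. lra.
Qed.

Lemma is_RInt_reflect (f : R -> R) a b l :
  is_RInt f a b l -> is_RInt (fun v => f (1 - v)) (1 - b) (1 - a) l.
Proof.
  intros h. apply is_RInt_swap in h.
  replace b with (-1 * (1 - b) + 1) in h by ring.
  replace a with (-1 * (1 - a) + 1) in h by ring.
  apply is_RInt_comp_lin, is_RInt_opp in h.
  rewrite opp_opp in h.
  eapply is_RInt_ext; [|exact h].
  intros x _. cbn. replace (-1 * x + 1) with (1 - x) by ring. ring.
Qed.

Definition log_majorant_primitive (u : R) : R := u * (29 + (2 * ln 2 + 1 - 2 * ln u) ^ 2).

Lemma is_RInt_log_majorant a b : 0 < a <= b ->
  is_RInt log_majorant a b (log_majorant_primitive b - log_majorant_primitive a).
Proof.
  intros hab.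
  apply (is_RInt_derive (V := R_CompleteNormedModule)); intros x hx;
    rewrite Rmin_left, Rmax_right in hx by lra.
  - unfold log_majorant_primitive, log_majorant. auto_derive; [lra|]. field. lra.
  - apply (ex_derive_continuous (K := R_AbsRing) (V := R_NormedModule)).
    unfold log_majorant. auto_derive. lra.
Qed.

(** The majorant is unbounded near [0], so on [(0, 1/(N+1))] the crude bound is
    integrated instead; there it is dominated by the primitive. *)
Lemma RInt_half_le (f : R -> R) (N : R) : 1 <= N -> ex_RInt f 0 (1 / 2) ->
  (forall u, 0 < u < 1 / 2 -> N ^ 2 * f u <= 25 + (1 + 2 * ln (N + 1)) ^ 2) ->
  (forall u, 0 < u < 1 / 2 -> N ^ 2 * f u <= log_majorant u) ->
  N ^ 2 * RInt f 0 (1 / 2) <= log_majorant_primitive (1 / 2).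
Proof.
  intros hN hf hcrude hlog.
  assert (ha : 0 < / (N + 1) <= 1 / 2).
  { split; [apply Rinv_0_lt_compat; lra|].
    apply Rmult_le_reg_l with (N + 1); [lra|]. field_simplify; lra. }
  replace (N ^ 2 * RInt f 0 (1 / 2)) with (RInt (fun u => N ^ 2 * f u) 0 (1 / 2))
    by exact (RInt_scal f 0 (1 / 2) (N ^ 2) hf).
  apply (RInt_le_split_majorant _ log_majorant _ (/ (N + 1)) (1 / 2)
           (25 + (1 + 2 * ln (N + 1)) ^ 2)).
  - exact ha.
  - exact (ex_RInt_scal f 0 (1 / 2) (N ^ 2) hf).
  - intros u hu. apply hcrude. lra.
  - intros u hu. apply hlog. lra.
  - apply is_RInt_log_majorant. lra.
  - unfold log_majorant_primitive. rewrite ln_Rinv by lra.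
    apply Rmult_le_compat_l; [lra|].
    assert (0 <= ln (N + 1)) by (rewrite <- ln_1; apply ln_le; lra).
    pose proof ln_lt_2. nra.
Qed.

Lemma RInt_err2_le n : (1 <= n)%nat ->
  INR n ^ 2 * RInt (err2 n) 0 1 <= 2 * log_majorant_primitive (1 / 2).
Proof.
  intros hn. assert (hN : 1 <= INR n) by (apply (le_INR 1); lia).
  pose proof (ex_RInt_err2 n hn) as hex.
  assert (hl : ex_RInt (err2 n) 0 (1 / 2)) by (apply (ex_RInt_Chasles_1 (V := R_CompleteNormedModule) _ 0 (1 / 2) 1); [lra | exact hex]).
  assert (hr : ex_RInt (err2 n) (1 / 2) 1) by (apply (ex_RInt_Chasles_2 (V := R_CompleteNormedModule) _ 0 (1 / 2) 1); [lra | exact hex]).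
  assert (hrefl : is_RInt (fun v => err2 n (1 - v)) 0 (1 / 2) (RInt (err2 n) (1 / 2) 1)).
  { pose proof (is_RInt_reflect _ _ _ _ (RInt_correct (V := R_CompleteNormedModule) _ _ _ hr)) as h.
    replace (1 - 1) with 0 in h by ring. replace (1 - 1 / 2) with (1 / 2) in h by field.
    exact h. }
  rewrite <- (RInt_Chasles (err2 n) 0 (1 / 2) 1 hl hr), <- (is_RInt_unique _ _ _ _ hrefl).
  pose proof (RInt_half_le (err2 n) (INR n) hN hl
    (fun u hu => err2_le_crude n u hn ltac:(lra))
    (fun u hu => err2_le_log_majorant n u u hn ltac:(lra) ltac:(lra) ltac:(lra) ltac:(lra))).
  pose proof (RInt_half_le (fun v => err2 n (1 - v)) (INR n) hN (ex_intro _ _ hrefl)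
    (fun v hv => err2_le_crude n (1 - v) hn ltac:(lra))
    (fun v hv => err2_le_log_majorant n (1 - v) v hn ltac:(lra) ltac:(lra) ltac:(lra) ltac:(lra))).
  unfold plus; simpl. lra.
Qed.

(** * Numerical bounds *)

Lemma ln2_le : ln 2 <= 0.71.
Proof.
  rewrite <- (ln_exp 0.71). apply ln_le; [lra|].
  eapply Rle_trans; [|apply (exp_ge_taylor 0.71 5); lra].
  cbn [sum_f_R0 Factorial.fact pow Nat.mul Nat.add INR]. lra.
Qed.

Lemma INR_fact_succ k : INR (Factorial.fact (S k)) = INR (S k) * INR (Factorial.fact k).
Proof. rewrite fact_simpl, mult_INR. reflexivity. Qed.

Lemma PI_bounds : 3.14 < PI < 3.142.
Proof.
  split.
  - assert (3.14 / 2 < PI / 2); [|lra].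
    apply PI2_lower_bound; [lra|].
    destruct (pre_cos_bound (3.14 / 2) 2) as [h _]; [lra | lra |].
    eapply Rlt_le_trans; [|exact h].
    unfold cos_approx, cos_term. cbn [sum_f_R0 Nat.mul Nat.add pow].
    rewrite !INR_fact_succ. cbn [Factorial.fact INR]. lra.
  - destruct (Rle_lt_dec (3.142 / 2) (PI / 2)) as [h|h]; [exfalso|lra].
    assert (0 <= cos (3.142 / 2)) by (apply cos_ge_0; lra).
    destruct (pre_cos_bound (3.142 / 2) 2) as [_ h']; [lra | lra |].
    revert h'. unfold cos_approx, cos_term. cbn [sum_f_R0 Nat.mul Nat.add pow].
    rewrite !INR_fact_succ. cbn [Factorial.fact INR]. lra.
Qed.

Lemma sqrt3_bounds : 1.732 < sqrt 3 < 1.7321.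
Proof.
  split.
  - rewrite <- (sqrt_pow2 1.732) by lra. apply sqrt_lt_1; lra.
  - rewrite <- (sqrt_pow2 1.7321) by lra. apply sqrt_lt_1; lra.
Qed.

Lemma rate_constant_bounds : 6.615 <= 3 + 2 * PI / sqrt 3 < 6.63.
Proof.
  pose proof PI_bounds. pose proof sqrt3_bounds.
  split.
  - assert (3.615 <= 2 * PI / sqrt 3); [|lra].
    apply Rmult_le_reg_r with (sqrt 3); [lra|]. field_simplify; lra.
  - assert (2 * PI / sqrt 3 < 3.63); [|lra].
    apply Rmult_lt_reg_r with (sqrt 3); [lra|]. field_simplify; lra.
Qed.

Lemma log_majorant_primitive_half :
  2 * log_majorant_primitive (1 / 2) = 29 + (4 * ln 2 + 1) ^ 2.
Proof.
  unfold log_majorant_primitive, Rdiv. rewrite Rmult_1_l, ln_Rinv by lra. field.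
Qed.

Theorem lemma2p2 (n : nat) (hn : (1 <= n)%nat) :
  ex_RInt (err2 n) 0 1 /\
  sqrt (RInt (err2 n) 0 1) <= (3 + 2 * PI / sqrt 3) * / INR n /\
  (3 + 2 * PI / sqrt 3) * / INR n < (663 / 100) / INR n.
Proof.
  assert (hN : 1 <= INR n) by (apply (le_INR 1); lia).
  assert (hN' : 0 < / INR n) by (apply Rinv_0_lt_compat; lra).
  pose proof (RInt_err2_le n hn) as hI. rewrite log_majorant_primitive_half in hI.
  pose proof ln2_le. pose proof ln_lt_2. pose proof rate_constant_bounds as hK.
  set (K := 3 + 2 * PI / sqrt 3) in *.
  split; [exact (ex_RInt_err2 n hn) | split].
  - rewrite <- (sqrt_pow2 (K * / INR n)) by nra.
    apply sqrt_le_1_alt.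
    assert (29 + (4 * ln 2 + 1) ^ 2 <= K ^ 2) by nra.
    apply Rmult_le_reg_l with (INR n ^ 2); [nra|].
    replace (INR n ^ 2 * (K * / INR n) ^ 2) with (K ^ 2) by (field; apply not_0_INR; lia).
    lra.
  - unfold Rdiv. apply Rmult_lt_compat_r; lra.
Qed.
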